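(* Let $\mathcal{A}$ be a finite set, $d\ge1$, and let $\mathcal{M}=\{(\mu_i,D_i)\}_{i=1}^\infty$ be locally mixing with $D_i\uparrow\mathbb{Z}^d$ as $i\to\infty$ (each $\mu_i$ a probability measure on $\mathcal{A}^{D_i}$). Then $\mu_i$ converges as $i\to\infty$ (in the sense of convergence of the marginals on every finite set) to a probability measure $\mu$ on $\mathcal{A}^{\mathbb{Z}^d}$, and $\mu$ is locally mixing with the same rate function.
   Context: A rate function is a decreasing function $\rho:\mathbb{N}\to[0,\infty)$ with $\rho(k)\to0$ as $k\to\infty$. Let $\Lambda_n=[-n,n]^d\cap\mathbb{Z}^d$. Let $\mathcal{M}$ be a collection of pairs $(\mu,D)$ with $D\subset\mathbb{Z}^d$ (possibly infinite) and $\mu$ a probability measure on $\mathcal{A}^D$. $\mathcal{M}$ is locally mixing with rate function $\rho$ if for every $n\ge1$ and all $(\mu,D),(\mu',D')\in\mathcal{M}$ with $\Lambda_n\subset D\cap D'$ there exists a coupling of $f\sim\mu$ and $f'\sim\mu'$ such that (1) $f|_{D\setminus\Lambda_n}$ and $f'$ are independent, and (2) $\mathbb{P}(f(v)\neq f'(v))\le\rho(n-k)$ for every $0\le k\le n$ and every $v\in\Lambda_k$. $\mathcal{M}$ is locally mixing if it is locally mixing with some rate function. A single measure $\mu$ on $\mathcal{A}^{\mathbb{Z}^d}$ is locally mixing (with rate $\rho$) if $\{(\mu,\mathbb{Z}^d)\}$ is. *)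

From HB Require Import structures.
From mathcomp Require Import all_boot all_order all_algebra.
From mathcomp Require Import all_classical all_reals.
From mathcomp Require Import ereal topology normedtype sequences measure probability.
Set Implicit Arguments. Unset Strict Implicit. Unset Printing Implicit Defensive.
Import Order.TTheory GRing.Theory Num.Theory.
Import numFieldNormedType.Exports.
Local Open Scope classical_set_scope.
Local Open Scope ring_scope.

Definition Zd (d : nat) := 'I_d -> int.

Definition box (d n : nat) : set (Zd d) :=
  [set v | forall j : 'I_d, (- (n%:Z) <= v j <= n%:Z)%R].
Arguments box : clear implicits.

Definition sub (d : nat) (D : set (Zd d)) := {v : Zd d | D v}.

Definition cyl (A : pointedType) (d : nat) (D : set (Zd d)) : set (set (sub D -> A)) :=
  [set B | exists (v : sub D) (a : A), B = [set f | f v = a]].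

(* A^D with the product sigma-algebra *)
Notation cfg A D := (g_sigma_algebraType (@cyl A _ D)).

Definition restr_out (A : pointedType) (d : nat) (D : set (Zd d)) (n : nat)
  (f : cfg A D) : cfg A (D `\` box d n) :=
  fun v => f (exist _ (proj1_sig v) (proj1 (proj2_sig v))).
Arguments restr_out {A d D} n f.

Definition rate_function (R : realType) (rho : nat -> R) : Prop :=
  (forall m n : nat, (m <= n)%N -> rho n <= rho m) /\
  (forall k, 0 <= rho k) /\
  rho @ \oo --> (0 : R).

(* A coupling pi (joint law of (f, f')) of mu and mu' witnessing the local
   mixing requirement at scale n with rate rho *)
Definition mixing_coupling (A : pointedType) (d : nat) (R : realType)
  (rho : nat -> R) (n : nat) (D D' : set (Zd d))
  (mu : probability (cfg A D) R) (mu' : probability (cfg A D') R)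
  (pi : probability (cfg A D * cfg A D')%type R) : Prop :=
  (forall B : set (cfg A D), measurable B -> pi (B `*` setT) = mu B) /\
  (forall C : set (cfg A D'), measurable C -> pi (setT `*` C) = mu' C) /\
  (forall (B : set (cfg A (D `\` box d n))) (C : set (cfg A D')),
      measurable B -> measurable C ->
      pi ((restr_out n @^-1` B) `*` C) =
      (pi ((restr_out n @^-1` B) `*` setT) * pi (setT `*` C))%E) /\
  (forall (k : nat) (v : Zd d) (hv : D v) (hv' : D' v),
      (k <= n)%N -> box d k v ->
      (pi [set p | p.1 (exist _ v hv) <> p.2 (exist _ v hv')]
        <= (rho (n - k)%N)%:E)%E).

Definition locally_mixing_with (A : pointedType) (d : nat) (R : realType)
  (I : Type) (D : I -> set (Zd d)) (mu : forall i, probability (cfg A (D i)) R)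
  (rho : nat -> R) : Prop :=
  rate_function rho /\
  forall (n : nat), (1 <= n)%N -> forall i j : I,
    box d n `<=` D i `&` D j ->
    exists pi : probability (cfg A (D i) * cfg A (D j))%type R,
      mixing_coupling rho n (mu i) (mu j) pi.

Definition cyl_event (A : pointedType) (d : nat) (D : set (Zd d))
  (F : set (Zd d)) (eta : Zd d -> A) : set (cfg A D) :=
  [set f | forall (v : Zd d) (hv : D v), F v -> f (exist _ v hv) = eta v].
Arguments cyl_event {A d} D F eta.

From HB Require Import structures.
From mathcomp Require Import all_boot all_order all_algebra.
From mathcomp Require Import all_classical all_reals.
From mathcomp Require Import ereal topology normedtype sequences measure probability.
From mathcomp Require Import lra zify.
From Stdlib Require List.
Import numFieldNormedType.Exports.
Set Implicit Arguments. Unset Strict Implicit. Unset Printing Implicit Defensive.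
Import Order.TTheory GRing.Theory Num.Theory.
Local Open Scope classical_set_scope.
Local Open Scope ring_scope.

(* Configurations over a finite alphabet form a compact space, so a finitely additive
   probability on cylindrical events is automatically sigma-additive and extends
   (Caratheodory) to a probability on the product sigma-algebra.  Fix an ultrafilter U
   containing the cofinite filter on nat.  The U-limits of the cylinder probabilities of
   the mu_i (extended arbitrarily outside D_i) define a probability nu.  A mixing coupling
   of mu_i and mu_j at scale n gives
     |mu_i (f = eta on F) - mu_j (f = eta on F)| <= |F| rho (n - k)
   whenever F lies in Lambda_k and Lambda_n in D_i and D_j, so these probabilities are
   Cauchy and converge to those of nu.  Viewing the couplings of mu_i with itself as configurations over A * A, the same
   U-limit yields a coupling of nu with itself: its marginals, the independence of
   f restricted to the complement of Lambda_n from f', and the bounds on P(f v <> f' v)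
   pass to the limit on cylindrical events, and extend to all events by Dynkin's
   pi-lambda theorem. *)

(** * Cylindrical sets *)

Section cylindrical_sets.
Variables (I B : Type).
Implicit Types (s : seq I) (E : set (I -> B)).

Definition depends_on s E :=
  forall x y : I -> B, (forall v, List.In v s -> x v = y v) -> E x -> E y.

Definition cylindrical E := exists s, depends_on s E.

Lemma cylindrical0 : cylindrical set0.
Proof. by exists [::]. Qed.

Lemma cylindricalT : cylindrical setT.
Proof. by exists [::]. Qed.

Lemma cylindricalC E : cylindrical E -> cylindrical (~` E).
Proof.
move=> [s sE]; exists s => x y xy nEx Ey; apply: nEx.
by apply: (sE y) => // v /xy.
Qed.

Lemma cylindricalU E1 E2 : cylindrical E1 -> cylindrical E2 -> cylindrical (E1 `|` E2).
Proof.
move=> [s1 sE1] [s2 sE2]; exists (s1 ++ s2) => x y xy [E1x|E2x].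
  by left; apply: (sE1 x) => // v v1; apply/xy/List.in_or_app; left.
by right; apply: (sE2 x) => // v v2; apply/xy/List.in_or_app; right.
Qed.

Lemma cylindricalI E1 E2 : cylindrical E1 -> cylindrical E2 -> cylindrical (E1 `&` E2).
Proof.
by move=> cE1 cE2; rewrite -[_ `&` _]setCK setCI; apply/cylindricalC/cylindricalU;
  apply: cylindricalC.
Qed.

Lemma cylindricalD E1 E2 : cylindrical E1 -> cylindrical E2 -> cylindrical (E1 `\` E2).
Proof. by move=> cE1 cE2; rewrite setDE; apply/cylindricalI/cylindricalC. Qed.

Lemma cylindrical_setI_closed : setI_closed cylindrical.
Proof. exact: cylindricalI. Qed.

Lemma cylindrical_bigsetU (J : Type) (r : seq J) (F : J -> set (I -> B)) :
  (forall j, cylindrical (F j)) -> cylindrical (\big[setU/set0]_(j <- r) F j).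
Proof.
move=> cF; elim: r => [|j r ih]; first by rewrite big_nil; exact: cylindrical0.
by rewrite big_cons; apply: cylindricalU.
Qed.

Lemma cylindrical_coord v (b : B) : cylindrical [set x | x v = b].
Proof. by exists [:: v] => x y xy /= <-; rewrite xy //; left. Qed.

End cylindrical_sets.

Definition finitary (J B' I B : Type) (g : (J -> B') -> I -> B) :=
  forall v : I, exists s : seq J,
    forall x y, (forall w, List.In w s -> x w = y w) -> g x v = g y v.

Lemma cylindrical_preimage (J B' I B : Type) (g : (J -> B') -> I -> B)
    (E : set (I -> B)) :
  finitary g -> cylindrical E -> cylindrical (g @^-1` E).
Proof.
move=> /choice[S gS] [s sE]; exists (List.flat_map S s) => x y xy /=.
apply: sE => v vs; apply: gS => w wS; apply: xy.
by apply/List.in_flat_map; exists v.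
Qed.

Definition coord_events (I : Type) (B : Type) : set (set (I -> B)) :=
  [set E | exists (v : I) (b : B), E = [set x | x v = b]].

Notation conf I B := (g_sigma_algebraType (@coord_events I B)).

(** * Finite alphabets: measurability and compactness *)

Lemma finite_setT_seq (B : choiceType) :
  finite_set [set: B] -> exists r : seq B, forall b, b \in r.
Proof.
move=> /finite_seqP[r rB].
by exists r => b; have : [set: B] b by []; rewrite rB.
Qed.

Lemma finite_setT_prod (A B : Type) :
  finite_set [set: A] -> finite_set [set: B] -> finite_set [set: A * B].
Proof. by move=> fA fB; rewrite -setXTT; exact: finite_setX. Qed.

Lemma ultra_bigsetU (T J : Type) (W : set_system T) (r : seq J) (S : J -> set T) :
  UltraFilter W -> W (\big[setU/set0]_(j <- r) S j) -> exists j, W (S j).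
Proof.
move=> uW; elim: r => [|j r ih]; rewrite ?big_nil ?big_cons.
  by move=> W0; exfalso; exact: (@filter_not_empty _ W _ W0).
move=> WU; case: (in_ultra_setVsetC (S j) uW) => [|WC]; first by exists j.
by apply: ih; apply: filterS (filterI WU WC) => x [[|]].
Qed.

Lemma measurable_to_conf dT (T : measurableType dT) (I : Type) (B : pointedType)
    (f : T -> conf I B) :
  (forall v b, measurable (f @^-1` [set x | x v = b])) -> measurable_fun setT f.
Proof.
move=> mf; apply: (@measurability _ _ _ _ setT f (@coord_events I B)) => //.
by move=> _ [_ [v [b ->]] <-]; rewrite setTI; exact: mf.
Qed.

Lemma preimage_measurable dT dT' (T : measurableType dT) (T' : measurableType dT')
    (f : T -> T') (E : set T') :
  measurable_fun setT f -> measurable E -> measurable (f @^-1` E).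
Proof. by move=> mf mE; rewrite -[_ @^-1` _]setTI; exact: mf. Qed.

Section finite_alphabet.
Variables (I : Type) (B : pointedType).
Hypothesis fB : finite_set [set: B].

Lemma cylindrical_measurable (E : set (conf I B)) : cylindrical E -> measurable E.
Proof.
have [r rB] := finite_setT_seq fB.
(* Induction on [s]: split [E] according to the value at the first coordinate. *)
move=> [s]; elim: s E => [|v s ih] E sE.
  have [[x Ex]|nE] := pselect (E !=set0).
    by have -> : E = setT by apply/seteqP; split => // y _; exact: (sE x).
  by have -> : E = set0 by apply/seteqP; split => // y Ey; apply: nE; exists y.
pose set_at b (x : I -> B) w := if `[< w = v >] then b else x w.
have -> : E = \big[setU/set0]_(b <- r) ([set x | x v = b] `&` (set_at b @^-1` E)).
  apply/seteqP; split => x; rewrite -bigcup_seq.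
    move=> Ex; exists (x v); first exact: rB.
    split => //=; apply: (sE x) => // w _.
    by rewrite /set_at; case: asboolP => // ->.
  move=> [b _ [/= xv Ex]]; apply: (sE _ _ _ Ex) => w _.
  by rewrite /set_at; case: asboolP => // ->.
apply: bigsetU_measurable => b _; apply: measurableI.
  by apply: sub_sigma_algebra; exists v, b.
apply: ih => x y xy; apply: sE => w [<-|ws]; rewrite /set_at; case: asboolP => //.
by move=> _; exact: xy.
Qed.

Lemma measurable_conf_cylindricalE : @measurable _ (conf I B) = <<s @cylindrical I B >>.
Proof.
apply/seteqP; split.
  apply: smallest_sub; first exact: smallest_sigma_algebra.
  by move=> _ [v [b ->]]; apply: sub_sigma_algebra; exact: cylindrical_coord.
apply: smallest_sub; first exact: sigma_algebra_measurable.
exact: cylindrical_measurable.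
Qed.

(* Compactness of [B^I]: an ultrafilter refining the [G k] chooses a value at each coordinate. *)
Lemma nested_cylindrical_common_point (G : nat -> set (I -> B)) :
  (forall k, cylindrical (G k)) -> (forall k, G k.+1 `<=` G k) ->
  (forall k, G k !=set0) -> exists x, forall k, G k x.
Proof.
move=> cG decrG neG; have [r rB] := finite_setT_seq fB.
have decrG' : {homo G : i j / (i <= j)%N >-> j `<=` i}.
  apply: (@homo_leq _ G (fun X Y => Y `<=` X)) => [X|Y X Z XY YZ|]//.
  exact: subset_trans YZ XY.
have GF : ProperFilter (filter_from [set: nat] G).
  apply: filter_from_proper => [|i _]; last exact: neG.
  apply: filter_from_filter; first by exists 0%N.
  by move=> i j _ _; exists (maxn i j) => //; rewrite subsetI;
    split; apply: decrG'; rewrite ?leq_maxl ?leq_maxr.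
have [W [uW GW]] := ultraFilterLemma GF.
have /choice[x Wx] : forall v, exists b, W [set y : I -> B | y v = b].
  move=> v; apply: (ultra_bigsetU (r := r)) => //.
  apply: filterS (@filterT _ W _) => y _.
  by rewrite -bigcup_seq; exists (y v); first exact: rB.
exists x => k; have [s sG] := cG k.
have Ws : W [set y | forall v, List.In v s -> y v = x v].
  elim: s {sG} => [|v s ih]; first by apply: filterS (@filterT _ W _) => y _ v [].
  by apply: filterS (filterI (Wx v) ih) => y [yv ys] w [<-|/ys].
have WG : W (G k) by apply: GW; exists k.
have [y [Gy ys]] := filter_ex (filterI WG Ws).
by apply: (sG y) => // v /ys.
Qed.

Lemma cylindrical_bigcup_eventually_empty (E : set (I -> B)) (F : nat -> set (I -> B)) :
  cylindrical E -> (forall k, cylindrical (F k)) -> trivIset setT F ->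
  E = \bigcup_k F k -> exists K, forall k, (K <= k)%N -> F k = set0.
Proof.
move=> cE cF tF EF.
pose G k := E `\` \big[setU/set0]_(i < k) F i.
have [K GK] : exists K, G K = set0.
  apply: contrapT => /forallNP nG.
  have [x Gx] : exists x, forall k, G k x.
    apply: nested_cylindrical_common_point => [k|k y [Ey nU]|k].
    - by apply: cylindricalD => //; apply: cylindrical_bigsetU.
    - by split => // Uy; apply: nU; rewrite big_ord_recr /=; left.
    - by apply/set0P/eqP; exact: nG.
  have [+ _] := Gx 0%N; rewrite EF => -[k _ Fkx].
  by have [_] := Gx k.+1; rewrite big_ord_recr /=; apply; right.
exists K => k Kk; apply/seteqP; split => // x Fkx.
have : (\big[setU/set0]_(i < K) F i) x.
  apply: contrapT => nU; suff : G K x by rewrite GK.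
  by split => //; rewrite EF; exists k.
rewrite -bigcup_mkord => -[i /= iK Fix].
have Fik0 : F i `&` F k = set0.
  by apply: (trivIsetP.1 tF) => //; rewrite neq_ltn (leq_trans iK Kk).
by have /seteqP[/(_ x (conj Fix Fkx))] := Fik0.
Qed.

End finite_alphabet.

Lemma finitary_measurable (J I : Type) (B' B : pointedType) (g : (J -> B') -> I -> B) :
  finite_set [set: B'] -> finitary g -> measurable_fun setT (g : conf J B' -> conf I B).
Proof.
move=> fB' fg; apply: measurable_to_conf => v b.
exact: (cylindrical_measurable fB' (cylindrical_preimage fg (cylindrical_coord v b))).
Qed.

Lemma measurable_coord_neq (B : pointedType) (J1 J2 : Type) (w1 : J1) (w2 : J2) :
  finite_set [set: B] ->
  measurable [set p : conf J1 B * conf J2 B | p.1 w1 <> p.2 w2].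
Proof.
move=> /finite_setT_seq[r rB].
have -> : [set p : conf J1 B * conf J2 B | p.1 w1 <> p.2 w2] =
    \big[setU/set0]_(b <- r) ([set x | x w1 = b] `*` ~` [set y | y w2 = b]).
  rewrite -bigcup_seq; apply/seteqP; split => [[x y] /= xy|[x y] [b _ [/= -> yb]] bw].
    by exists (x w1); [exact: rB | split => //= yx; apply: xy].
  exact: yb.
apply: bigsetU_measurable => b _; apply: measurableX.
  by apply: sub_sigma_algebra; exists w1, b.
by apply: measurableC; apply: sub_sigma_algebra; exists w2, b.
Qed.

Section pair_configurations.
Variables (J : Type) (A : pointedType).

Definition zip_conf (p : (J -> A) * (J -> A)) : J -> A * A := fun w => (p.1 w, p.2 w).

Definition unzip_conf (g : J -> A * A) : (J -> A) * (J -> A) :=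
  (fun w => (g w).1, fun w => (g w).2).

Lemma measurable_zip_conf :
  measurable_fun setT (zip_conf : conf J A * conf J A -> conf J (A * A)).
Proof.
apply: measurable_to_conf => w [a1 a2].
have -> : zip_conf @^-1` [set g | g w = (a1, a2)] =
    [set x : conf J A | x w = a1] `*` [set y : conf J A | y w = a2].
  by apply/seteqP; split => -[x y] /=; rewrite /zip_conf /= => -[-> ->].
by apply: measurableX; apply: sub_sigma_algebra; [exists w, a1 | exists w, a2].
Qed.

Let finitary_unzip1 : finitary (fun g : J -> A * A => (unzip_conf g).1).
Proof. by move=> w; exists [:: w] => x y /= -> //; left. Qed.

Let finitary_unzip2 : finitary (fun g : J -> A * A => (unzip_conf g).2).
Proof. by move=> w; exists [:: w] => x y /= -> //; left. Qed.

Lemma measurable_unzip_conf : finite_set [set: A] ->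
  measurable_fun setT (unzip_conf : conf J (A * A) -> conf J A * conf J A).
Proof.
move=> fA; have fAA := finite_setT_prod fA fA.
by apply: measurable_fun_pair; apply: finitary_measurable fAA _;
  [exact: finitary_unzip1 | exact: finitary_unzip2].
Qed.

Lemma cylindrical_unzip_setX (E1 E2 : set (J -> A)) :
  cylindrical E1 -> cylindrical E2 -> cylindrical (unzip_conf @^-1` (E1 `*` E2)).
Proof.
by move=> cE1 cE2; apply: cylindricalI; apply: cylindrical_preimage.
Qed.

End pair_configurations.

Arguments zip_conf {J A} p.
Arguments unzip_conf {J A} g.

(** * Extension of cylindrical contents *)

Definition cylinder_algebra (I : Type) (B : pointedType) : Type := I -> B.
HB.instance Definition _ I B := Pointed.on (cylinder_algebra I B).
HB.instance Definition _ I B := @isAlgebraOfSets.Build default_measure_display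
  (cylinder_algebra I B) (@cylindrical I B) (@cylindrical0 I B)
  (@cylindricalU I B) (@cylindricalC I B).

Section cylindrical_content_extension.
Variables (R : realType) (I : Type) (B : pointedType).
Hypothesis fB : finite_set [set: B].
Variable m : set (I -> B) -> R.
Hypothesis m_ge0 : forall E, cylindrical E -> 0 <= m E.
Hypothesis mT : m setT = 1.
Hypothesis m_additive : forall E1 E2, cylindrical E1 -> cylindrical E2 ->
  E1 `&` E2 = set0 -> m (E1 `|` E2) = m E1 + m E2.

Let m0 : m set0 = 0.
Proof.
have := m_additive (@cylindrical0 I B) (@cylindrical0 I B) (set0I _).
by rewrite setU0; lra.
Qed.

Let m_bigsetU (F : nat -> set (I -> B)) n :
  (forall k, cylindrical (F k)) -> trivIset setT F ->
  m (\big[setU/set0]_(i < n) F i) = \sum_(i < n) m (F i).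
Proof.
move=> cF tF; elim: n => [|n ih]; first by rewrite !big_ord0 m0.
rewrite !big_ord_recr /= m_additive ?ih //; first exact: cylindrical_bigsetU.
rewrite -bigcup_mkord; apply/seteqP; split => // x [[i /= ilt Fix] Fnx].
have Fin0 : F i `&` F n = set0 by apply: (trivIsetP.1 tF) => //; rewrite ltn_eqF.
by have /seteqP[/(_ x (conj Fix Fnx))] := Fin0.
Qed.

(* [m] is only constrained on cylindrical sets; the [max] makes [content] nonnegative. *)
Let content (E : set (cylinder_algebra I B)) : \bar R := (Num.max (m E) 0)%:E.

Let contentE E : cylindrical E -> content E = (m E)%:E.
Proof. by move=> cE; rewrite /content max_l ?m_ge0. Qed.

Let content0 : content set0 = 0.
Proof. by rewrite contentE ?m0 //; exact: cylindrical0. Qed.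

Let content_ge0 E : (0 <= content E)%E.
Proof. by rewrite lee_fin le_max lexx orbT. Qed.

Let content_sigma_additive : semi_sigma_additive content.
Proof.
move=> F cF tF cU.
have [K FK] := cylindrical_bigcup_eventually_empty fB cU cF tF erefl.
apply: cvg_near_cst; exists K => // n /= Kn.
have -> : \bigcup_k F k = \big[setU/set0]_(i < n) F i.
  rewrite -bigcup_mkord; apply/seteqP; split => x; last by move=> [k _ Fkx]; exists k.
  move=> [k _ Fkx]; exists k => //=; rewrite ltnNge; apply/negP => nk.
  by move: Fkx; rewrite FK // (leq_trans Kn nk).
rewrite contentE; last by apply: cylindrical_bigsetU => i; exact: cF.
rewrite m_bigsetU // -sumEFin big_mkord; apply: eq_bigr => i _.
by rewrite contentE //; exact: cF.
Qed.

HB.instance Definition _ := isMeasure.Build _ _ _ content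
  content0 content_ge0 content_sigma_additive.

Let extension (E : set (conf I B)) : \bar R := measure_extension content E.

Let measurable_conf_extension (E : set (conf I B)) : measurable E ->
  (default_measure_display.-measurable).-sigma.-measurable
    (E : set (cylinder_algebra I B)).
Proof.
apply: smallest_sub; first exact: smallest_sigma_algebra.
by move=> _ [v [b ->]]; apply: sub_sigma_algebra; exact: cylindrical_coord.
Qed.

Let extension0 : extension set0 = 0.
Proof. exact: measure0. Qed.

Let extension_ge0 E : (0 <= extension E)%E.
Proof. exact: measure_ge0. Qed.

Let extension_sigma_additive : semi_sigma_additive extension.
Proof.
move=> F mF tF mU; apply: (measure_semi_sigma_additive (s := measure_extension content)).
- by move=> i; exact: measurable_conf_extension.
- exact: tF.
- exact: measurable_conf_extension.
Qed.

HB.instance Definition _ := isMeasure.Build _ _ _ extension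
  extension0 extension_ge0 extension_sigma_additive.

Let extensionE E : cylindrical E -> extension E = (m E)%:E.
Proof.
move=> cE; rewrite /extension /measure_extension measurable_mu_extE //.
exact: contentE.
Qed.

Let extensionT : extension setT = 1%E.
Proof. by rewrite extensionE ?mT //; exact: cylindricalT. Qed.

HB.instance Definition _ := Measure_isProbability.Build _ _ _ extension extensionT.

Lemma cylindrical_content_extension :
  exists P : probability (conf I B) R, forall E, cylindrical E -> P E = (m E)%:E.
Proof. by exists extension; exact: extensionE. Qed.
End cylindrical_content_extension.

Section probability_fine.
Context d (T : measurableType d) (R : realType) (P : probability T R).

Lemma probability_fineK (S : set T) : measurable S -> P S = (fine (P S))%:E.
Proof. by move=> mS; rewrite fineK // fin_num_measure. Qed.

Lemma fine_probability_itv (S : set T) : measurable S -> 0 <= fine (P S) <= 1.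
Proof.
move=> mS; rewrite fine_ge0 ?measure_ge0 //=.
by rewrite -lee_fin -probability_fineK // probability_le1.
Qed.

Lemma fine_measureU (S1 S2 : set T) : measurable S1 -> measurable S2 ->
  S1 `&` S2 = set0 -> fine (P (S1 `|` S2)) = fine (P S1) + fine (P S2).
Proof. by move=> mS1 mS2 S12; rewrite measureU // fineD // fin_num_measure. Qed.

End probability_fine.

Lemma measure_bigsetU_le dT (T : measurableType dT) (R : realType)
    (P : {measure set T -> \bar R}) (J : Type) (S : J -> set T) (c : R) (s : seq J) :
  (forall j, measurable (S j)) -> (forall j, (P (S j) <= c%:E)%E) ->
  (P (\big[setU/set0]_(j <- s) S j) <= ((size s)%:R * c)%:E)%E.
Proof.
move=> mS PS; elim: s => [|j s ih]; first by rewrite big_nil measure0 mul0r.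
rewrite big_cons; apply: le_trans (measureU2 _ (mS j) _) _.
  by apply: bigsetU_measurable => w _; exact: mS.
by rewrite /= -add1n natrD mulrDl mul1r EFinD leeD.
Qed.

Section ultrafilter_limits.
Variables (R : realType) (U : set_system nat).
Hypothesis U_ultra : UltraFilter U.

Lemma ultra_cvg_itv (x : nat -> R) (a b : R) : (forall i, a <= x i <= b) -> cvg (x @ U).
Proof.
move=> xab; have xU : ProperFilter (x @ U) by apply: fmap_proper_filter.
have [l [_ xl]] : exists l, `[a, b]%classic l /\ cluster (x @ U) l.
  apply: segment_compact; change (U (x @^-1` `[a, b]%classic)).
  by apply: filterS (@filterT _ U _) => i _ /=; rewrite in_itv /=; exact: xab.
apply/cvg_ex; exists l => N Nl /=.
case: (in_ultra_setVsetC (x @^-1` N) U_ultra) => // xNC; exfalso.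
by have [y []] := xl (~` N) N xNC Nl.
Qed.

Lemma ultralimit_probability (I : Type) (B : pointedType) (dT : nat -> measure_display)
    (T : forall i, measurableType (dT i)) (P : forall i, probability (T i) R)
    (g : forall i, T i -> I -> B) :
  finite_set [set: B] ->
  (forall i E, cylindrical E -> measurable (g i @^-1` E)) ->
  exists Q : probability (conf I B) R, forall E, cylindrical E ->
    Q E = (lim ((fun i => fine (P i (g i @^-1` E))) @ U))%:E.
Proof.
move=> fB mg; pose p E i := fine (P i (g i @^-1` E)).
have p_cvg E : cylindrical E -> cvg (p E @ U).
  by move=> cE; apply: (@ultra_cvg_itv _ 0 1) => i; exact/fine_probability_itv/mg.
apply: (@cylindrical_content_extension _ _ _ fB (fun E => lim (p E @ U)))
  => [E cE||E1 E2 cE1 cE2 E12] /=.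
- apply: limr_ge; first exact: p_cvg.
  by apply: nearW => i; have /andP[] := fine_probability_itv (P i) (mg i E cE).
- have -> : p setT = cst 1 by apply/funext => i; rewrite /p preimage_setT probability_setT.
  exact: lim_cst.
- have -> : p (E1 `|` E2) = p E1 + p E2.
    apply/funext => i; rewrite /p preimage_setU fine_measureU //; [exact: mg..|].
    by rewrite -preimage_setI E12 preimage_set0.
  by rewrite limD //; exact: p_cvg.
Qed.

End ultrafilter_limits.

Section tail_ultrafilter.
Variables (R : realType) (U : set_system nat).
Hypothesis U_ultra : UltraFilter U.
Hypothesis U_tails : forall N, U [set i | (N <= i)%N].

Lemma lim_eq_tail (x y : nat -> R) N :
  (forall i, (N <= i)%N -> x i = y i) -> lim (x @ U) = lim (y @ U).
Proof.
have tail_sub (x' y' : nat -> R) S : (forall i, (N <= i)%N -> x' i = y' i) ->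
    U (x' @^-1` S) -> U (y' @^-1` S).
  move=> xy' US; apply: filterS (filterI US (U_tails N)) => i [Si Ni].
  by rewrite /= -xy'.
move=> xy; congr lim; apply/funext => S; apply/propext.
by split; apply: tail_sub => // i /xy.
Qed.

Lemma cvg_ultra_cauchy (a : nat -> R) (l : R) : a @ U --> l ->
  (forall e, 0 < e -> exists N, forall i j,
    (N <= i)%N -> (N <= j)%N -> `|a i - a j| <= e) ->
  a @ \oo --> l.
Proof.
move=> al aC; apply/cvgrPdist_le => e e0.
have e20 : 0 < e / 2 by rewrite divr_gt0.
have [N aN] := aC _ e20.
have alU : \forall j \near U, `|l - a j| <= e / 2 by exact: (cvgrPdist_le _ _).1 al _ e20.
have [j [Nj alj]] := filter_ex (filterI (U_tails N) alU).
exists N => // i /= Ni.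
by apply: le_trans (ler_distD (a j) _ _) _; rewrite (splitr e) lerD ?aN.
Qed.

End tail_ultrafilter.

(** * Dynkin arguments *)

Section lambda_additive.
Context d (T : measurableType d) (R : realType).

Definition lambda_additive (f : set T -> R) :=
  (forall S, measurable S -> f (~` S) = f setT - f S) /\
  (forall F : nat -> set T, (forall n, measurable (F n)) -> trivIset setT F ->
    (fun n => \sum_(i < n) f (F i)) @ \oo --> f (\bigcup_k F k)).

Lemma lambda_additiveMr (f : set T -> R) c :
  lambda_additive f -> lambda_additive (fun S => f S * c).
Proof.
move=> [fC fsigma]; split=> [S mS|F mF tF]; first by rewrite fC // mulrBl.
have -> : (fun n => \sum_(i < n) f (F i) * c) = (fun n => \sum_(i < n) f (F i)) \* cst c.
  by apply/funext => n; rewrite /= big_distrl.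
by apply: cvgM; [exact: fsigma | exact: cvg_cst].
Qed.

Lemma lambda_additive_eq (G : set (set T)) (f g : set T -> R) :
  @measurable _ T = <<s G >> -> setI_closed G ->
  lambda_additive f -> lambda_additive g -> f setT = g setT ->
  (forall S, G S -> f S = g S) -> forall S, measurable S -> f S = g S.
Proof.
move=> mG GI [fC fsigma] [gC gsigma] fgT fgG S mS.
apply: (dynkin_induction mG GI fgT fgG); last by rewrite -mG.
- by move=> S' mS' fgS'; rewrite fC // gC // fgS' fgT.
- move=> F mF tF fgF; apply: cvg_unique (fsigma F mF tF) _ => //.
  have -> : (fun n => \sum_(i < n) f (F i)) = (fun n => \sum_(i < n) g (F i)).
    by apply/funext => n; apply: eq_bigr => i _; exact: fgF.
  exact: gsigma.
Qed.

End lambda_additive.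

Lemma lambda_additive_fine_preimageI d d' (T : measurableType d)
    (T' : measurableType d') (R : realType) (P : probability T' R)
    (g : T' -> T) (K : set T') :
  measurable_fun setT g -> measurable K ->
  lambda_additive (fun S => fine (P (g @^-1` S `&` K))).
Proof.
move=> mg mK; have mgK S : measurable S -> measurable (g @^-1` S `&` K).
  by move=> mS; apply: measurableI => //; rewrite -[_ @^-1` _]setTI; exact: mg.
split=> [S mS|F mF tF].
  have SC0 : (g @^-1` (~` S) `&` K) `&` (g @^-1` S `&` K) = set0.
    by rewrite setIACA -preimage_setI setICl preimage_set0 set0I.
  have := fine_measureU P (mgK _ (measurableC mS)) (mgK _ mS) SC0.
  by rewrite -setIUl -preimage_setU setUCl => ->; rewrite addrK.
have mU : measurable (g @^-1` (\bigcup_k F k) `&` K) by apply/mgK/bigcupT_measurable.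
have tgF : trivIset setT (fun n => g @^-1` F n `&` K).
  apply/trivIsetP => i j _ _ ij.
  by rewrite setIACA -preimage_setI (trivIsetP.1 tF) // preimage_set0 set0I.
have := measure_semi_sigma_additive (s := P) _ (fun n => mgK _ (mF n)) tgF.
rewrite -setI_bigcupl -preimage_bigcup => /(_ mU) PF.
have /fine_cvg : (fun n => \sum_(i < n) (fine (P (g @^-1` F i `&` K)))%:E) @ \oo -->
    (fine (P (g @^-1` (\bigcup_k F k) `&` K)))%:E.
  rewrite -probability_fineK //; apply: cvg_trans PF; apply: near_eq_cvg.
  apply: nearW => n /=; rewrite big_mkord; apply: eq_bigr => i _.
  exact/probability_fineK/mgK.
apply: cvg_trans; apply: near_eq_cvg; apply: nearW => n /=.
by rewrite sumEFin.
Qed.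

Lemma probability_preimage_eq (R : realType) (B : pointedType) dT (T : measurableType dT)
    (I : Type) (P : probability T R) (f : T -> conf I B) (Q : probability (conf I B) R) :
  finite_set [set: B] -> measurable_fun setT f ->
  (forall E, cylindrical E -> P (f @^-1` E) = Q E) ->
  forall E, measurable E -> P (f @^-1` E) = Q E.
Proof.
move=> fB mf PQ E mE.
rewrite (probability_fineK P (preimage_measurable mf mE)) (probability_fineK Q mE).
congr EFin.
have := lambda_additive_eq (@measurable_conf_cylindricalE I _ fB)
  (@cylindrical_setI_closed _ _) (lambda_additive_fine_preimageI P mf measurableT)
  (lambda_additive_fine_preimageI Q (@measurable_id _ _ setT) measurableT) _ _ mE.
rewrite !setIT; apply; first by rewrite !preimage_setT !probability_setT.
by move=> S cS; rewrite !setIT PQ.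
Qed.

Section cylindrical_independence.
Variables (R : realType) (B : pointedType) (dT : measure_display) (T : measurableType dT).
Variables (I1 I2 : Type) (P : probability (T * conf I2 B)%type R) (f : T -> conf I1 B).
Hypotheses (fB : finite_set [set: B]) (mf : measurable_fun setT f).
Hypothesis P_indep_cyl : forall E1 E2, cylindrical E1 -> cylindrical E2 ->
  P (f @^-1` E1 `*` E2) = (P (f @^-1` E1 `*` setT) * P (setT `*` E2))%E.

Let measurable_setX (E1 : set (conf I1 B)) (E2 : set (conf I2 B)) :
  measurable E1 -> measurable E2 -> measurable (f @^-1` E1 `*` E2).
Proof. by move=> mE1 mE2; apply: measurableX => //; exact: preimage_measurable. Qed.

Let setXE1 (E1 : set (conf I1 B)) (E2 : set (conf I2 B)) :
  f @^-1` E1 `*` E2 = (f \o fst) @^-1` E1 `&` (setT `*` E2).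
Proof. by apply/seteqP; split=> -[x y] /=; tauto. Qed.

Let setXE2 (E1 : set (conf I1 B)) (E2 : set (conf I2 B)) :
  f @^-1` E1 `*` E2 = snd @^-1` E2 `&` (f @^-1` E1 `*` setT).
Proof. by apply/seteqP; split=> -[x y] /=; tauto. Qed.

Let fine_indep_cyl E2 : cylindrical E2 -> forall E1 : set (conf I1 B), measurable E1 ->
  fine (P (f @^-1` E1 `*` E2)) = fine (P (f @^-1` E1 `*` setT)) * fine (P (setT `*` E2)).
Proof.
move=> cE2 E1 mE1; rewrite (setXE1 E1 E2) (setXE1 E1 setT).
have mTE2 : measurable (setT `*` E2 : set (T * conf I2 B)).
  by apply: measurableX => //; exact: cylindrical_measurable.
have mffst : measurable_fun setT (f \o fst : T * conf I2 B -> conf I1 B).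
  exact: measurableT_comp mf measurable_fst.
have := lambda_additive_eq (@measurable_conf_cylindricalE I1 _ fB)
  (@cylindrical_setI_closed _ _) (lambda_additive_fine_preimageI P mffst mTE2)
  (lambda_additiveMr (fine (P (setT `*` E2)))
    (lambda_additive_fine_preimageI P mffst (measurableX measurableT measurableT)))
  _ _ mE1.
apply; first by rewrite preimage_setT !setTI setXTT probability_setT mul1r.
move=> S cS /=; rewrite -!setXE1 P_indep_cyl // fineM // fin_num_measure //.
by apply: measurable_setX => //; exact: cylindrical_measurable.
Qed.

Lemma probability_indep_cylindrical (E1 : set (conf I1 B)) (E2 : set (conf I2 B)) :
  measurable E1 -> measurable E2 ->
  P (f @^-1` E1 `*` E2) = (P (f @^-1` E1 `*` setT) * P (setT `*` E2))%E.
Proof.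
move=> mE1 mE2; rewrite (probability_fineK P (measurable_setX mE1 mE2)).
rewrite (probability_fineK P (measurable_setX mE1 measurableT)).
rewrite (probability_fineK P (measurableX measurableT mE2)) -EFinM; congr EFin.
rewrite (setXE2 E1 E2) setTX mulrC -[in RHS](setIT (snd @^-1` E2)).
have := lambda_additive_eq (@measurable_conf_cylindricalE I2 _ fB)
  (@cylindrical_setI_closed _ _)
  (lambda_additive_fine_preimageI P measurable_snd (measurable_setX mE1 measurableT))
  (lambda_additiveMr (fine (P (f @^-1` E1 `*` setT)))
    (lambda_additive_fine_preimageI P measurable_snd measurableT)) _ _ mE2.
apply; first by rewrite preimage_setT setTI setIT probability_setT mul1r.
by move=> S cS /=; rewrite -setXE2 setIT -setTX mulrC; exact: fine_indep_cyl.
Qed.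

End cylindrical_independence.

(** * Configurations on subsets of Z^d *)

Lemma in_seq_In (T : eqType) (x : T) (s : seq T) : x \in s -> List.In x s.
Proof. by elim: s => [//|y s ih]; rewrite in_cons => /orP[/eqP ->|/ih]; [left|right]. Qed.

Section lattice.
Variable d : nat.
Local Notation X := (Zd d).

Lemma finite_set_In (F : set X) :
  finite_set F -> exists s : seq X, forall v, F v -> List.In v s.
Proof.
move=> fF; pose tab (v : X) : {ffun 'I_d -> int} := [ffun j => v j].
have /finite_seqP[s sF] := finite_image tab fF.
exists (map (fun t : {ffun 'I_d -> int} => t : X) s) => v Fv.
have -> : v = tab v :> X by apply/funext => j; rewrite ffunE.
apply/List.in_map/in_seq_In.
have : [set tab x | x in F] (tab v) by exists v.
by rewrite sF.
Qed.

Lemma box_In n : exists s : seq X, forall v, box d n v -> List.In v s.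
Proof.
exists (map (fun t : {ffun 'I_d -> 'I_(n + n).+1} => fun j => (t j)%:Z - n%:Z)
  (enum [set: {ffun 'I_d -> 'I_(n + n).+1}])) => v vn.
pose t : {ffun 'I_d -> 'I_(n + n).+1} := [ffun j => inord (absz (v j + n%:Z))].
have -> : v = (fun j => (t j)%:Z - n%:Z).
  by apply/funext => j; rewrite ffunE inordK; have := vn j; lia.
by apply/List.in_map/in_seq_In; rewrite mem_enum in_setT.
Qed.

Lemma subset_box k n : (k <= n)%N -> box d k `<=` box d n.
Proof. by move=> kn v vk j; have := vk j; lia. Qed.

Lemma In_box (s : seq X) : exists k, forall v, List.In v s -> box d k v.
Proof.
elim: s => [|v s [k sk]]; first by exists 0%N.
pose M := \max_(j < d) absz (v j).
exists (maxn M k) => w /= [<-|ws]; last exact: subset_box (leq_maxr _ _) _ (sk _ ws).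
move=> j; have : (absz (v j) <= M)%N by exact: (@leq_bigmax _ (fun j => absz (v j)) j).
by have := leq_maxl M k; lia.
Qed.

Lemma cylindrical_points (B : Type) (D : set X) (s : seq X) (E : set (sub D -> B)) :
  (forall x y : sub D -> B, (forall v (Dv : D v), List.In v s ->
     x (exist _ v Dv) = y (exist _ v Dv)) -> E x -> E y) ->
  cylindrical E.
Proof.
have [s' ss'] : exists s' : seq (sub D),
    forall v (Dv : D v), List.In v s -> List.In (exist _ v Dv) s'.
  elim: s => [|v s [s' ih]]; first by exists [::].
  have [Dv|nDv] := pselect (D v).
    exists (exist _ v Dv :: s') => w Dw /= [vw|ws]; last by right; exact: ih.
    by left; subst w; congr exist; exact: Prop_irrelevance.
  by exists s' => w Dw /= [vw|]; [subst w|exact: ih].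
by move=> sE; exists s' => x y xy; apply: sE => v Dv vs; exact/xy/ss'.
Qed.

End lattice.

Section configurations.
Variable d : nat.
Local Notation X := (Zd d).

Definition extend (B : pointedType) (D D' : set X) (f : sub D -> B) : sub D' -> B :=
  fun w => if pselect (D (sval w)) is left Dw then f (exist _ (sval w) Dw) else point.
Arguments extend {B D} D' f.

Lemma extend_in (B : pointedType) (D D' : set X) (f : sub D -> B) v
    (D'v : D' v) (Dv : D v) :
  extend D' f (exist _ v D'v) = f (exist _ v Dv).
Proof.
rewrite /extend /=; case: pselect => [Dv'|//].
by rewrite (Prop_irrelevance Dv' Dv).
Qed.

Lemma finitary_extend (B : pointedType) (D D' : set X) : finitary (@extend B D D').
Proof.
move=> w; have [Dw|nDw] := pselect (D (sval w)).
  by exists [:: exist _ _ Dw] => x y xy; rewrite /extend; case: pselect => // Dw';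
    rewrite (Prop_irrelevance Dw' Dw); apply: xy; left.
by exists [::] => x y _; rewrite /extend; case: pselect.
Qed.

(* [cfg B D] is [conf (sub D) B] up to unfolding [cyl]: [exact] sees through this,
   [apply] does not. *)
Lemma measurable_extend (B : pointedType) (D D' : set X) : finite_set [set: B] ->
  measurable_fun setT (extend D' : cfg B D -> cfg B D').
Proof. move=> fB; have := finitary_measurable fB (@finitary_extend B D D'). exact. Qed.

Lemma finitary_restr_out (B : pointedType) (D : set X) n : finitary (@restr_out B d D n).
Proof.
by move=> w; exists [:: exist _ (sval w) (proj1 (proj2_sig w))] => x y xy; apply: xy; left.
Qed.

Lemma measurable_restr_out (B : pointedType) (D : set X) n : finite_set [set: B] ->
  measurable_fun setT (restr_out n : cfg B D -> cfg B (D `\` box d n)).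
Proof. by move=> fB; have := finitary_measurable fB (@finitary_restr_out B D n); exact. Qed.

Lemma restr_out_extend (B : pointedType) (D D' : set X) n (f : sub D -> B) :
  restr_out n (extend D' f) = extend (D' `\` box d n) (restr_out n f).
Proof.
apply/funext => -[v [D'v nv]]; rewrite /restr_out /extend /=.
case: pselect => [Dv|nDv]; case: pselect => [Dbv|nDbv] //.
- by rewrite (Prop_irrelevance (proj1 Dbv) Dv).
- by exfalso; apply: nDbv.
- by exfalso; apply: nDv; case: Dbv.
Qed.

Definition extend_pair (A : pointedType) (D D' : set X)
  (p : (sub D -> A) * (sub D -> A)) : (sub D' -> A) * (sub D' -> A) :=
  (extend D' p.1, extend D' p.2).

Lemma unzip_extend_zip (A : pointedType) (D D' : set X) (p : (sub D -> A) * (sub D -> A)) :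
  unzip_conf (extend D' (zip_conf p)) = extend_pair D' p.
Proof. by congr pair; apply/funext => w; rewrite /extend; case: pselect. Qed.

Lemma cylindrical_cyl_event (A : pointedType) (D F : set X) (eta : X -> A) (s : seq X) :
  (forall v, F v -> List.In v s) -> cylindrical (cyl_event D F eta).
Proof.
move=> Fs; apply: (@cylindrical_points _ _ _ s) => x y xy Ex v Dv Fv.
by rewrite -xy ?Ex //; exact: Fs.
Qed.

End configurations.

Arguments extend {d B D} D' f.
Arguments extend_pair {d A D} D' p.
Lemma measurable_extend_preimage (B : pointedType) (d : nat) (D D' : set (Zd d))
    (E : set (sub D' -> B)) :
  finite_set [set: B] -> cylindrical E -> measurable (extend D' @^-1` E : set (cfg B D)).
Proof.
move=> fB cE; have := preimage_measurable (@measurable_extend d B D D' fB)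
  (cylindrical_measurable fB cE); exact.
Qed.

(** * The limit of a locally mixing sequence *)

Lemma rate_function_eventually_le (R : realType) (rho : nat -> R) :
  rate_function rho -> forall e, 0 < e -> exists m, forall n, (m <= n)%N -> rho n <= e.
Proof.
move=> [_ [_ rho0]] e e0; have [m _ mP] := (cvgrPdist_le _ _).1 rho0 e e0.
by exists m => n /mP; rewrite sub0r normrN; apply: le_trans (ler_norm _).
Qed.

Section locally_mixing_limit.
Variables (A : pointedType) (d : nat) (R : realType) (D : nat -> set (Zd d))
  (mu : forall i, probability (cfg A (D i)) R) (rho : nat -> R).
Hypothesis fA : finite_set [set: A].
Hypothesis rho_rate : rate_function rho.
Hypothesis mu_mixing : forall n, (1 <= n)%N -> forall i j,
  box d n `<=` D i `&` D j -> exists pi, mixing_coupling rho n (mu i) (mu j) pi.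
Hypothesis D_incr : forall i, D i `<=` D i.+1.
Hypothesis D_cover : \bigcup_i D i = [set: Zd d].

Lemma D_mono : {homo D : i j / (i <= j)%N >-> i `<=` j}.
Proof. by apply: homo_leq => [X|Y X Z XY YZ|]//; exact: subset_trans XY YZ. Qed.

Lemma D_eventually_In (s : seq (Zd d)) :
  exists i0, forall i, (i0 <= i)%N -> forall v, List.In v s -> D i v.
Proof.
elim: s => [|v s [i0 si0]]; first by exists 0%N.
have [j _ Djv] : (\bigcup_i D i) v by rewrite D_cover.
exists (maxn j i0) => i; rewrite geq_max => /andP[ji i0i] w /= [<-|ws].
  exact: D_mono Djv.
exact: si0.
Qed.

Lemma D_eventually_box n : exists i0, forall i, (i0 <= i)%N -> box d n `<=` D i.
Proof.
have [s ns] := box_In d n; have [i0 si0] := D_eventually_In s.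
by exists i0 => i i0i v /ns; exact: si0.
Qed.

Lemma measurable_cyl_event (D0 F : set (Zd d)) (eta : Zd d -> A) (s : seq (Zd d)) :
  (forall v, F v -> List.In v s) -> measurable (cyl_event D0 F eta : set (cfg A D0)).
Proof. by move=> Fs; exact: (cylindrical_measurable fA (cylindrical_cyl_event _ _ Fs)). Qed.

Lemma cyl_event_mixing_le i j n k (F : set (Zd d)) (eta : Zd d -> A) (s : seq (Zd d)) :
  (1 <= n)%N -> box d n `<=` D i `&` D j -> (k <= n)%N -> F `<=` box d k ->
  (forall v, F v -> List.In v s) ->
  fine (mu i (cyl_event (D i) F eta)) <=
    fine (mu j (cyl_event (D j) F eta)) + (size s)%:R * rho (n - k).
Proof.
move=> n1 nDij kn Fk Fs; have [pi [pi1 [pi2 [_ pi_disc]]]] := mu_mixing n1 nDij.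
have mEi : measurable (cyl_event (D i) F eta : set (cfg A (D i))).
  exact: measurable_cyl_event Fs.
have mEj : measurable (cyl_event (D j) F eta : set (cfg A (D j))).
  exact: measurable_cyl_event Fs.
have /choice[S SP] : forall v, exists S : set (cfg A (D i) * cfg A (D j)),
    [/\ measurable S, (pi S <= (rho (n - k))%:E)%E &
      forall (f : cfg A (D i)) (f' : cfg A (D j)) (Div : D i v) (Djv : D j v),
        F v -> f (exist _ v Div) <> f' (exist _ v Djv) -> S (f, f')].
  move=> v; have [Fv|nFv] := pselect (F v); last first.
    by exists set0; split => //; rewrite measure0 lee_fin; case: rho_rate => _ [].
  have [Div Djv] := nDij _ (subset_box kn (Fk _ Fv)).
  exists [set p | p.1 (exist _ v Div) <> p.2 (exist _ v Djv)]; split.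
  - exact: measurable_coord_neq.
  - exact: pi_disc (Fk _ Fv).
  - move=> f f' Div' Djv' _.
    by rewrite (Prop_irrelevance Div' Div) (Prop_irrelevance Djv' Djv).
have mS v : measurable (S v) by have [] := SP v.
have mSs : measurable (\big[setU/set0]_(v <- s) S v) by exact: bigsetU_measurable.
have Ei_sub : cyl_event (D i) F eta `*` setT `<=`
    (setT `*` cyl_event (D j) F eta) `|` \big[setU/set0]_(v <- s) S v.
  move=> [f f'] [/= Ef _].
  have [Ef'|/existsNP[v /existsNP[Djv]]] := pselect (cyl_event (D j) F eta f'); first by left.
  move=> /not_implyP[Fv ne]; right.
  have Svf : S v (f, f').
    have [_ _] := SP v; apply=> // [|Div]; first exact: (nDij _ (subset_box kn (Fk _ Fv))).1.
    by rewrite (Ef _ Div Fv) => /esym.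
  elim: (s) (Fs _ Fv) => [//|w s' ih] /= [wv|vs']; rewrite big_cons.
    by left; rewrite wv.
  by right; exact: ih.
have : (mu i (cyl_event (D i) F eta) <=
    mu j (cyl_event (D j) F eta) + ((size s)%:R * rho (n - k))%:E)%E.
  rewrite -(pi1 _ mEi) -(pi2 _ mEj); apply: le_trans (le_measure pi _ _ Ei_sub) _.
  - by rewrite inE; apply: measurableX.
  - by rewrite inE; apply: measurableU => //; apply: measurableX.
  apply: le_trans (measureU2 _ _ mSs) _; first exact: measurableX.
  by apply: leeD => //; apply: measure_bigsetU_le => // v; have [] := SP v.
by rewrite (probability_fineK (mu i) mEi) (probability_fineK (mu j) mEj) -EFinD lee_fin.
Qed.

Lemma cyl_event_cauchy (F : set (Zd d)) (eta : Zd d -> A) (s : seq (Zd d)) :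
  (forall v, F v -> List.In v s) -> forall e, 0 < e -> exists N, forall i j,
    (N <= i)%N -> (N <= j)%N ->
    `|fine (mu i (cyl_event (D i) F eta)) - fine (mu j (cyl_event (D j) F eta))| <= e.
Proof.
move=> Fs e e0; have [k sk] := In_box s.
have Fk : F `<=` box d k by move=> v /Fs /sk.
pose S := (size s)%:R : R.
have e'0 : 0 < e / (S + 1) by rewrite divr_gt0 // ltr_wpDl.
have [m rho_m] := rate_function_eventually_le rho_rate e'0.
pose n := (k + m).+1.
have [N nD] := D_eventually_box n.
exists N => i j Ni Nj.
have nDij i' j' : (N <= i')%N -> (N <= j')%N -> box d n `<=` D i' `&` D j'.
  by move=> Ni' Nj' v nv; split; [exact: nD Ni' _ nv | exact: nD Nj' _ nv].
have kn : (k <= n)%N by rewrite /n; lia.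
have rho_nk : rho (n - k) <= e / (S + 1) by apply: rho_m; rewrite /n; lia.
have rho_ge0 : 0 <= rho (n - k) by case: rho_rate => _ [].
have S_rho : S * rho (n - k) <= e.
  apply: le_trans (_ : (S + 1) * (e / (S + 1)) <= e); first by rewrite ler_pM ?ler_wpDr.
  by rewrite mulrC divfK // gt_eqF // ltr_wpDl.
have n1 : (1 <= n)%N by [].
have := cyl_event_mixing_le eta n1 (nDij _ _ Ni Nj) kn Fk Fs.
have := cyl_event_mixing_le eta n1 (nDij _ _ Nj Ni) kn Fk Fs.
rewrite ler_norml /S; lra.
Qed.

Variable U : set_system nat.
Hypothesis U_ultra : UltraFilter U.
Hypothesis U_tails : forall N, U [set i | (N <= i)%N].
Variable nu : probability (cfg A [set: Zd d]) R.
Hypothesis nuE : forall E, cylindrical E ->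
  nu E = (lim ((fun i => fine (mu i (extend setT @^-1` E))) @ U))%:E.

Lemma cyl_event_cvg (F : set (Zd d)) (eta : Zd d -> A) : finite_set F ->
  (fun i => mu i (cyl_event (D i) F eta)) @ \oo --> nu (cyl_event setT F eta).
Proof.
move=> /finite_set_In[s Fs]; have [i0 si0] := D_eventually_In s.
pose a i := fine (mu i (cyl_event (D i) F eta)).
have extendE i : (i0 <= i)%N ->
    extend setT @^-1` cyl_event setT F eta = cyl_event (D i) F eta.
  move=> i0i; apply/seteqP; split => f /= Ef v Dv Fv.
    by rewrite -(extend_in f (I : setT v) Dv); exact: Ef.
  by rewrite (extend_in f _ (si0 _ i0i _ (Fs _ Fv))); exact: Ef.
have mE i : measurable (cyl_event (D i) F eta : set (cfg A (D i))).
  exact: measurable_cyl_event Fs.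
have a_U : a @ U --> lim (a @ U).
  by apply: (ultra_cvg_itv U_ultra (a := 0) (b := 1)) => i; exact: fine_probability_itv.
rewrite nuE; last exact: cylindrical_cyl_event Fs.
rewrite (@lim_eq_tail _ _ U_ultra U_tails _ a i0) => [|i /extendE -> //].
apply: cvg_EFin; first by apply: nearW => i; exact: fin_num_measure.
exact: (cvg_ultra_cauchy U_ultra U_tails a_U (cyl_event_cauchy eta Fs)).
Qed.

Let fAA : finite_set [set: A * A] := finite_setT_prod fA fA.

Let measurable_extend_zip (D0 : set (Zd d)) (E : set (sub [set: Zd d] -> A * A)) :
  cylindrical E ->
  measurable ((fun p => extend setT (zip_conf p)) @^-1` E : set (cfg A D0 * cfg A D0)).
Proof.
move=> cE; have := preimage_measurable (@measurable_zip_conf (sub D0) A)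
  (measurable_extend_preimage (D := D0) fAA cE); exact.
Qed.

Let measurable_extend_pair (D0 : set (Zd d)) (G : set (cfg A setT * cfg A setT)) :
  cylindrical (unzip_conf @^-1` G) ->
  measurable (extend_pair setT @^-1` G : set (cfg A D0 * cfg A D0)).
Proof.
move=> cG; have -> : extend_pair setT @^-1` G =
    (fun p => extend setT (zip_conf p)) @^-1` (unzip_conf @^-1` G) :> set (cfg A D0 * _).
  by apply/seteqP; split => p; rewrite /= unzip_extend_zip.
exact: measurable_extend_zip.
Qed.

Section limit_coupling.
(* Couplings at scale [n] only exist once [box d n] lies in [D i]: the index is shifted
   by [maxn i i0], which does not change limits along [U]. *)
Variables (n i0 : nat).
Hypothesis box_D : forall i, (i0 <= i)%N -> box d n `<=` D i.
Variable pi : forall i, probability (cfg A (D (maxn i i0)) * cfg A (D (maxn i i0)))%type R.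
Hypothesis pi_coupling : forall i,
  mixing_coupling rho n (mu (maxn i i0)) (mu (maxn i i0)) (pi i).
Variable PI : probability (cfg A [set: Zd d] * cfg A [set: Zd d])%type R.
Hypothesis PIE : forall G : set (cfg A [set: Zd d] * cfg A [set: Zd d]),
  cylindrical (unzip_conf @^-1` G) ->
  PI G = (lim ((fun i => fine (pi i (extend_pair setT @^-1` G))) @ U))%:E.

Let nu_tail E : cylindrical E ->
  nu E = (lim ((fun i => fine (mu (maxn i i0) (extend setT @^-1` E))) @ U))%:E.
Proof.
move=> cE; rewrite nuE //; congr EFin.
by apply: (lim_eq_tail U_ultra U_tails (N := i0)) => i /maxn_idPl ->.
Qed.

Let pi_cvg (G : set (cfg A [set: Zd d] * cfg A [set: Zd d])) :
  cylindrical (unzip_conf @^-1` G) ->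
  cvg ((fun i => fine (pi i (extend_pair setT @^-1` G))) @ U).
Proof.
move=> cG; apply: (ultra_cvg_itv U_ultra (a := 0) (b := 1)) => i.
exact: fine_probability_itv (measurable_extend_pair cG).
Qed.

Lemma limit_coupling_marginal1 (B : set (cfg A [set: Zd d])) :
  measurable B -> PI (B `*` setT) = nu B.
Proof.
rewrite setXT; apply: (probability_preimage_eq fA measurable_fst) => E cE.
rewrite -setXT PIE; last exact: cylindrical_unzip_setX (cylindricalT _ _).
rewrite nu_tail //; congr (lim (_ @ U))%:E; apply/funext => i /=.
by rewrite -(pi_coupling i).1; last exact: measurable_extend_preimage.
Qed.

Lemma limit_coupling_marginal2 (C : set (cfg A [set: Zd d])) :
  measurable C -> PI (setT `*` C) = nu C.
Proof.
rewrite setTX; apply: (probability_preimage_eq fA measurable_snd) => E cE.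
rewrite -setTX PIE; last exact: cylindrical_unzip_setX (cylindricalT _ _) cE.
rewrite nu_tail //; congr (lim (_ @ U))%:E; apply/funext => i /=.
by rewrite -(pi_coupling i).2.1; last exact: measurable_extend_preimage.
Qed.

Lemma limit_coupling_indep (B : set (cfg A ([set: Zd d] `\` box d n)))
    (C : set (cfg A [set: Zd d])) :
  measurable B -> measurable C ->
  PI (restr_out n @^-1` B `*` C) =
    (PI (restr_out n @^-1` B `*` setT) * PI (setT `*` C))%E.
Proof.
move: B C; have := @probability_indep_cylindrical R A _ _ _ _ PI (restr_out n) fA
  (measurable_restr_out (n := n) fA).
move=> indep; apply: indep => B' C' cB' cC'.
have crB' := cylindrical_preimage (@finitary_restr_out d A setT n) cB'.
have cX E1 E2 := @cylindrical_unzip_setX _ A E1 E2.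
have cBC : cylindrical (unzip_conf @^-1` (restr_out n @^-1` B' `*` C')) by exact: cX.
have cBT : cylindrical (unzip_conf @^-1` (restr_out n @^-1` B' `*` setT)).
  by apply: cX => //; exact: cylindricalT.
have cTC : cylindrical (unzip_conf @^-1` (setT `*` C')).
  by apply: cX => //; exact: cylindricalT.
rewrite !PIE // -EFinM -limM; try exact: pi_cvg.
congr (lim (_ @ U))%:E; apply/funext => i /=.
pose B'' := extend (setT `\` box d n) @^-1` B' : set (cfg A (D (maxn i i0) `\` box d n)).
have mB'' : measurable B''.
  have := preimage_measurable (@measurable_extend d A (D (maxn i i0) `\` box d n) _ fA)
    (cylindrical_measurable fA cB'); exact.
have restr_extend E : extend_pair setT @^-1` (restr_out n @^-1` B' `*` E) =
    restr_out n @^-1` B'' `*` (extend setT @^-1` E).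
  by apply/seteqP; split=> -[f f']; rewrite /= restr_out_extend.
rewrite !restr_extend preimage_setT (pi_coupling i).2.2.1 //; last first.
  exact: measurable_extend_preimage.
rewrite fineM //; apply: fin_num_measure; apply: measurableX => //.
- exact: preimage_measurable (measurable_restr_out (n := n) fA) mB''.
- exact: measurable_extend_preimage.
Qed.

Lemma limit_coupling_disagreement k v (hv hv' : [set: Zd d] v) :
  (k <= n)%N -> box d k v ->
  (PI [set p | p.1 (exist _ v hv) <> p.2 (exist _ v hv')] <= (rho (n - k))%:E)%E.
Proof.
move=> kn kv; pose G : set (cfg A setT * cfg A setT) :=
  [set p | p.1 (exist _ v hv) <> p.2 (exist _ v hv')].
have cG : cylindrical (unzip_conf @^-1` G).
  by exists [:: exist _ v hv] => x y xy; rewrite /G /= (Prop_irrelevance hv' hv) !xy //; left.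
rewrite PIE // lee_fin; apply: limr_le; first exact: pi_cvg.
apply: nearW => i; have Dv := box_D (leq_maxr i i0) (subset_box kn kv).
have -> : extend_pair setT @^-1` G =
    [set p | p.1 (exist _ v Dv) <> p.2 (exist _ v Dv)] :> set (cfg A _ * cfg A _).
  by apply/seteqP; split=> -[f f']; rewrite /G /= !extend_in.
rewrite -lee_fin -probability_fineK; last exact: measurable_coord_neq.
exact: (pi_coupling i).2.2.2.
Qed.

Lemma limit_coupling_mixing : mixing_coupling rho n nu nu PI.
Proof.
split; first exact: limit_coupling_marginal1.
split; first exact: limit_coupling_marginal2.
by split; [exact: limit_coupling_indep | exact: limit_coupling_disagreement].
Qed.

End limit_coupling.

Lemma nu_mixing_coupling n : (1 <= n)%N -> exists PI, mixing_coupling rho n nu nu PI.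
Proof.
move=> n1; have [i0 box_D] := D_eventually_box n.
have coupling i : {c | mixing_coupling rho n (mu (maxn i i0)) (mu (maxn i i0)) c}.
  apply: cid; apply: (mu_mixing n1) => v /(box_D _ (leq_maxr i i0)) Dv.
  by split.
have [Q QE] := @ultralimit_probability _ _ U_ultra _ _ _ _ (fun i => sval (coupling i))
  (fun i p => extend setT (zip_conf p)) fAA (fun i E cE => measurable_extend_zip cE).
exists (distribution Q (mfun_Sub (mem_set (measurable_unzip_conf fA)))).
apply: (limit_coupling_mixing box_D (fun i => svalP (coupling i))) => G cG.
rewrite -[LHS]/(Q (unzip_conf @^-1` G)) QE //; congr (lim (_ @ U))%:E.
apply/funext => i /=.
by congr (fine (_ _)); apply/seteqP; split => p; rewrite /= unzip_extend_zip.
Qed.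

End locally_mixing_limit.

Theorem proposition2p2 (A : pointedType) (d : nat) (R : realType)
  (D : nat -> set (Zd d)) (mu : forall i, probability (cfg A (D i)) R)
  (rho : nat -> R) :
  finite_set [set: A] ->
  (1 <= d)%N ->
  locally_mixing_with mu rho ->
  (forall i, D i `<=` D i.+1) ->
  \bigcup_i D i = [set: Zd d] ->
  exists nu : probability (cfg A [set: Zd d]) R,
    (forall (F : set (Zd d)) (eta : Zd d -> A), finite_set F ->
       (fun i => mu i (cyl_event (D i) F eta)) @ \oo
         --> nu (cyl_event [set: Zd d] F eta)) /\
    @locally_mixing_with A d R unit (fun _ => [set: Zd d]) (fun _ => nu) rho.
Proof.
move=> fA _ [rho_rate mu_mixing] D_incr D_cover.
have [U [U_ultra ooU]] := @ultraFilterLemma nat \oo _.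
have U_tails N : U [set i | (N <= i)%N] by apply: ooU; exists N.
have [nu nuE] := @ultralimit_probability _ _ U_ultra _ _ _ _ mu (fun i => extend setT) fA
  (fun i E cE => measurable_extend_preimage fA cE).
exists nu; split.
  exact: (cyl_event_cvg fA rho_rate mu_mixing D_incr D_cover U_ultra U_tails nuE).
split => // n n1 [] [] _.
exact: (nu_mixing_coupling fA mu_mixing D_incr D_cover U_ultra U_tails nuE).
Qed.
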